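(* Let $k\ge1$ and $B>0$ be constants and let $F:[0,1]^2\to[0,1]^2$ be as defined below. 1. If $B<2$, then $(1/2,1/2)$ is the unique fixed point of $F$, and it is Jacobian attractive. 2. If $B>2$, then the system $\exp(B\sqrt k(1-2\alpha_R))=\frac{1-\alpha_L}{\alpha_L}$, $\exp(\frac{B}{\sqrt k}(1-2\alpha_L))=\frac{1-\alpha_R}{\alpha_R}$ has exactly one solution $(\alpha_L^*,\alpha_R^* )$ with $\alpha_L^*,\alpha_R^*\in(1/2,1)$; this point is the unique fixed point of $F$, and it is Jacobian attractive.
   Context: The map $F$: for $(\alpha_L,\alpha_R)\in[0,1]^2$, if $\sqrt{\alpha_L\alpha_R}\,B\le1$ set $(\theta_L,\theta_R)=(0,0)$; otherwise let $(\theta_L,\theta_R)$ be the unique solution with $\theta_L,\theta_R>0$ of $\exp(-B\sqrt k\,\alpha_R\theta_R)=1-\theta_L$ and $\exp(-\frac{B}{\sqrt k}\alpha_L\theta_L)=1-\theta_R$. Then $F(\alpha_L,\alpha_R)=\big(\tfrac12(1+\theta_L\alpha_L),\tfrac12(1+\theta_R\alpha_R)\big)$. A fixed point is Jacobian attractive if $F$ is differentiable there and all eigenvalues of its Jacobian matrix have absolute value strictly less than $1$. *)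

From Stdlib Require Import Reals ClassicalEpsilon.
Open Scope R_scope.

Definition theta_system (B k aL aR tL tR : R) : Prop :=
  0 < tL /\ 0 < tR /\
  exp (- (B * sqrt k * aR * tR)) = 1 - tL /\
  exp (- (B / sqrt k * aL * tL)) = 1 - tR.

(* (theta_L, theta_R): (0,0) if sqrt(aL aR) B <= 1, otherwise "the unique"
   positive solution of the system (selected by Hilbert's epsilon; when the
   solution exists and is unique, as asserted in the paper, this is it). *)
Definition theta (B k aL aR : R) : R * R :=
  match Rle_dec (sqrt (aL * aR) * B) 1 with
  | left _ => (0, 0)
  | right _ =>
      epsilon (inhabits (0, 0))
        (fun p : R * R => theta_system B k aL aR (fst p) (snd p))
  end.

Definition F (B k : R) (a : R * R) : R * R :=
  let aL := fst a in let aR := snd a in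
  let t := theta B k aL aR in
  ((1 + fst t * aL) / 2, (1 + snd t * aR) / 2).

Definition in_unit_square (a : R * R) : Prop :=
  0 <= fst a <= 1 /\ 0 <= snd a <= 1.

Definition is_fixed_point (B k : R) (a : R * R) : Prop :=
  in_unit_square a /\ F B k a = a.

Record mat2 := Mat2 { m11 : R; m12 : R; m21 : R; m22 : R }.

Definition norm2 (x y : R) : R := sqrt (x * x + y * y).

Definition has_jacobian (G : R * R -> R * R) (p : R * R) (J : mat2) : Prop :=
  forall eps, 0 < eps -> exists delta, 0 < delta /\
    forall h1 h2, norm2 h1 h2 < delta ->
      let q := G (fst p + h1, snd p + h2) in
      let g := G p in
      norm2 (fst q - fst g - (m11 J * h1 + m12 J * h2))
            (snd q - snd g - (m21 J * h1 + m22 J * h2))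
      <= eps * norm2 h1 h2.

(* lambda = a + i b is a (complex) eigenvalue of the real matrix J:
   there is a nonzero v = (v1r + i v1i, v2r + i v2i) in C^2 with J v = lambda v. *)
Definition is_eigenvalue (J : mat2) (a b : R) : Prop :=
  exists v1r v1i v2r v2i : R,
    (v1r <> 0 \/ v1i <> 0 \/ v2r <> 0 \/ v2i <> 0) /\
    m11 J * v1r + m12 J * v2r = a * v1r - b * v1i /\
    m11 J * v1i + m12 J * v2i = a * v1i + b * v1r /\
    m21 J * v1r + m22 J * v2r = a * v2r - b * v2i /\
    m21 J * v1i + m22 J * v2i = a * v2i + b * v2r.

Definition jacobian_attractive (B k : R) (p : R * R) : Prop :=
  is_fixed_point B k p /\
  exists J, has_jacobian (F B k) p J /\
    forall a b, is_eigenvalue J a b -> sqrt (a * a + b * b) < 1.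

Definition alpha_system (B k aL aR : R) : Prop :=
  exp (B * sqrt k * (1 - 2 * aR)) = (1 - aL) / aL /\
  exp (B / sqrt k * (1 - 2 * aL)) = (1 - aR) / aR.

(* Write [c = B sqrt k], [d = B / sqrt k] and [L y = 1 - exp (- y)].  Above the
   threshold, [theta] is the positive solution of [tL = L (c aR tR)], [tR = L (d aL tL)],
   and a fixed point of [F] corresponds, through [x = 2 aL - 1], [y = 2 aR - 1], to a
   positive solution of [x = tanh (c y / 2)], [y = tanh (d x / 2)].  Both are systems
   [x = f (a y)], [y = f (b x)] with [f] increasing, bounded by 1 and [f z / z] strictly
   decreasing from [f'(0)]: positive solutions are unique, and exist iff
   [a b > f'(0)^-2].  For the tanh system, [a b = B^2] and [f'(0) = 1/2].
   For [B < 2], [F] is constant near [(1/2, 1/2)].  For [B > 2], the solution of the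
   [L]-system is continuous, then differentiable, in [(aL, aR)]; the Jacobian of [F]
   has a positive off-diagonal product, hence real eigenvalues, and these lie in
   [(-1, 1)] by the Schur-Cohn conditions, which reduce to [z tanh' z < tanh z]. *)

From Stdlib Require Import Reals Lra Psatz ClassicalEpsilon.
From Coquelicot Require Import Coquelicot.
Open Scope R_scope.

Lemma increasing_of_derive_pos (f f' : R -> R) (a b : R) : a < b ->
  (forall x, a <= x <= b -> is_derive f x (f' x)) ->
  (forall x, a < x < b -> 0 < f' x) -> f a < f b.
Proof.
  intros Hab Hd Hpos.
  destruct (MVT_cor2 f f' a b Hab) as [c [Hc Hcab]].
  { intros x Hx. apply is_derive_Reals, Hd, Hx. }
  specialize (Hpos c Hcab). nra.
Qed.

Lemma ratio_decreasing_of_derive (f f' : R -> R) :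
  (forall z, 0 < z -> is_derive f z (f' z)) -> (forall z, 0 < z -> z * f' z < f z) ->
  forall x y, 0 < x < y -> x * f y < y * f x.
Proof.
  intros Hd Htan x y [Hx Hxy].
  assert (Hdec : - (f x / x) < - (f y / y)).
  { apply (increasing_of_derive_pos (fun z => - (f z / z))
      (fun z => (f z - z * f' z) / (z * z))); [lra| |].
    - intros z Hz. pose proof (Hd z ltac:(lra)) as Hz'.
      auto_derive; [split; [eexists; exact Hz' | split; [lra | exact I]] |].
      replace (Derive (fun x0 : R => f x0) z) with (f' z)
        by (symmetry; apply is_derive_unique; exact Hz'). field. lra.
    - intros z Hz. apply Rdiv_lt_0_compat; [|nra]. pose proof (Htan z ltac:(lra)). lra. }
  apply Ropp_lt_cancel in Hdec.
  apply (Rmult_lt_compat_l (x * y)) in Hdec; [|nra].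
  replace (x * y * (f y / y)) with (x * f y) in Hdec by (field; lra).
  replace (x * y * (f x / x)) with (y * f x) in Hdec by (field; lra).
  exact Hdec.
Qed.

Lemma is_derive_little_o (f : R -> R) (y0 l eps : R) : is_derive f y0 l -> 0 < eps ->
  exists dl, 0 < dl /\ forall t, Rabs t < dl -> Rabs (f (y0 + t) - f y0 - l * t) <= eps * Rabs t.
Proof.
  intros Hd Heps. apply is_derive_Reals in Hd.
  destruct (Hd eps Heps) as [dl Hdl]. exists dl. split; [apply cond_pos|].
  intros t Ht. destruct (Req_dec t 0) as [->|Ht0].
  - rewrite Rplus_0_r, Rabs_R0. replace (f y0 - f y0 - l * 0) with 0 by ring.
    rewrite Rabs_R0. lra.
  - replace (f (y0 + t) - f y0 - l * t) with (t * ((f (y0 + t) - f y0) / t - l)) by (field; auto).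
    rewrite Rabs_mult, Rmult_comm. apply Rmult_le_compat_r; [apply Rabs_pos|].
    left. now apply Hdl.
Qed.

Lemma Rabs_add_scaled_le (c u v : R) : 0 <= c -> Rabs (u + c * v) <= Rabs u + c * Rabs v.
Proof.
  intros Hc. eapply Rle_trans; [apply Rabs_triang|].
  rewrite Rabs_mult, (Rabs_pos_eq c) by lra. lra.
Qed.

Lemma Rabs_scaled_le (c u : R) : 0 <= c <= 1 -> Rabs (c * u) <= Rabs u.
Proof.
  intros Hc. rewrite Rabs_mult, (Rabs_pos_eq c) by lra.
  pose proof (Rabs_pos u). nra.
Qed.

Lemma linear_system_cramer_bounds (al be x0 y0 h1 h2 p q e1 e2 : R) :
  0 <= al -> 0 <= be -> 0 < 1 - al * be -> 0 <= x0 <= 1 -> 0 <= y0 <= 1 ->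
  p = x0 * h1 + al * q + e1 -> q = y0 * h2 + be * p + e2 ->
  (1 - al * be) * (Rabs p + Rabs q)
    <= (1 + al + be) * (Rabs h1 + Rabs h2 + (Rabs e1 + Rabs e2)) /\
  (1 - al * be) * (Rabs (p - (x0 * h1 + al * y0 * h2) / (1 - al * be)) +
                   Rabs (q - (be * x0 * h1 + y0 * h2) / (1 - al * be)))
    <= (1 + al + be) * (Rabs e1 + Rabs e2).
Proof.
  intros Hal Hbe HS Hx0 Hy0 Ep Eq.
  set (S := 1 - al * be) in *.
  assert (Sp : S * p = x0 * h1 + al * (y0 * h2) + (e1 + al * e2)).
  { unfold S. rewrite Eq in Ep. lra. }
  assert (Sq : S * q = y0 * h2 + be * (x0 * h1) + (e2 + be * e1)).
  { unfold S. rewrite Ep in Eq. lra. }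
  assert (Herr : Rabs (e1 + al * e2) + Rabs (e2 + be * e1)
                 <= (1 + al + be) * (Rabs e1 + Rabs e2)).
  { pose proof (Rabs_add_scaled_le al e1 e2 Hal). pose proof (Rabs_add_scaled_le be e2 e1 Hbe).
    pose proof (Rabs_pos e1). pose proof (Rabs_pos e2). nra. }
  split.
  - assert (A1 : Rabs (x0 * h1 + al * (y0 * h2)) <= Rabs h1 + al * Rabs h2).
    { eapply Rle_trans; [apply Rabs_add_scaled_le, Hal|].
      pose proof (Rabs_scaled_le x0 h1 Hx0).
      pose proof (Rmult_le_compat_l al _ _ Hal (Rabs_scaled_le y0 h2 Hy0)). lra. }
    assert (A2 : Rabs (y0 * h2 + be * (x0 * h1)) <= Rabs h2 + be * Rabs h1).
    { eapply Rle_trans; [apply Rabs_add_scaled_le, Hbe|].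
      pose proof (Rabs_scaled_le y0 h2 Hy0).
      pose proof (Rmult_le_compat_l be _ _ Hbe (Rabs_scaled_le x0 h1 Hx0)). lra. }
    pose proof (Rabs_triang (x0 * h1 + al * (y0 * h2)) (e1 + al * e2)).
    pose proof (Rabs_triang (y0 * h2 + be * (x0 * h1)) (e2 + be * e1)).
    assert (0 <= al * Rabs h1) by (apply Rmult_le_pos; [lra | apply Rabs_pos]).
    assert (0 <= be * Rabs h2) by (apply Rmult_le_pos; [lra | apply Rabs_pos]).
    rewrite <- Sp, <- Sq, !Rabs_mult, (Rabs_pos_eq S) in * by lra. lra.
  - replace (p - (x0 * h1 + al * y0 * h2) / S) with ((e1 + al * e2) / S)
      by (apply (Rmult_eq_reg_l S); [|lra]; field_simplify; [rewrite Sp; ring | lra | lra]).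
    replace (q - (be * x0 * h1 + y0 * h2) / S) with ((e2 + be * e1) / S)
      by (apply (Rmult_eq_reg_l S); [|lra]; field_simplify; [rewrite Sq; ring | lra | lra]).
    unfold Rdiv. rewrite !Rabs_mult, Rabs_inv, (Rabs_pos_eq S) by lra.
    replace (S * (Rabs (e1 + al * e2) * / S + Rabs (e2 + be * e1) * / S))
      with (Rabs (e1 + al * e2) + Rabs (e2 + be * e1)) by (field; lra).
    exact Herr.
Qed.

Lemma linear_system_perturb (al be x0 y0 eps : R) : 0 <= al -> 0 <= be -> 0 < 1 - al * be ->
  0 <= x0 <= 1 -> 0 <= y0 <= 1 -> 0 < eps ->
  exists eta, 0 < eta /\ forall h1 h2 p q e1 e2,
    p = x0 * h1 + al * q + e1 -> q = y0 * h2 + be * p + e2 ->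
    Rabs e1 <= eta * (Rabs h1 + Rabs h2 + Rabs q) ->
    Rabs e2 <= eta * (Rabs h1 + Rabs h2 + Rabs p) ->
    Rabs (p - (x0 * h1 + al * y0 * h2) / (1 - al * be)) +
    Rabs (q - (be * x0 * h1 + y0 * h2) / (1 - al * be)) <= eps * (Rabs h1 + Rabs h2).
Proof.
  intros Hal Hbe HS Hx0 Hy0 Heps.
  set (S := 1 - al * be) in *. set (M := 1 + al + be).
  assert (HS1 : S <= 1) by (unfold S; nra).
  assert (HM : 1 <= M) by (unfold M; lra).
  set (eta := Rmin (S / (2 * M)) (eps * (S * S * S) / (8 * (M * M)))).
  assert (Heta : 0 < eta)
    by (apply Rmin_pos; apply Rdiv_lt_0_compat; repeat apply Rmult_lt_0_compat; lra).
  assert (Heta1 : M * eta <= S / 2).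
  { pose proof (Rmin_l (S / (2 * M)) (eps * (S * S * S) / (8 * (M * M)))) as H. fold eta in H.
    apply Rle_div_r in H; lra. }
  assert (Heta2 : 8 * (M * M) * eta <= eps * (S * S * S)).
  { pose proof (Rmin_r (S / (2 * M)) (eps * (S * S * S) / (8 * (M * M)))) as H. fold eta in H.
    apply Rle_div_r in H; [lra | nra]. }
  exists eta. split; [exact Heta|].
  intros h1 h2 p q e1 e2 Ep Eq He1 He2.
  destruct (linear_system_cramer_bounds al be x0 y0 h1 h2 p q e1 e2 Hal Hbe HS Hx0 Hy0 Ep Eq)
    as [Hsol Herr]. fold S M in Hsol, Herr.
  set (H := Rabs h1 + Rabs h2) in *. set (D := Rabs p + Rabs q) in *.
  set (E := Rabs e1 + Rabs e2) in *.
  set (err := Rabs (p - (x0 * h1 + al * y0 * h2) / S) + Rabs (q - (be * x0 * h1 + y0 * h2) / S))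
    in *.
  assert (HH : 0 <= H) by (unfold H; pose proof (Rabs_pos h1); pose proof (Rabs_pos h2); lra).
  assert (HD : 0 <= D) by (unfold D; pose proof (Rabs_pos p); pose proof (Rabs_pos q); lra).
  assert (HE : E <= eta * (2 * H + D)) by (unfold E, H, D in *; lra).
  (* first [|p| + |q| = O(|h|)], hence [|e1| + |e2| = O(eta |h|)] *)
  assert (HD6 : S * D <= 6 * M * H).
  { assert (M * E <= M * (eta * (2 * H + D))) by (apply Rmult_le_compat_l; lra).
    assert (M * eta * D <= S / 2 * D) by (apply Rmult_le_compat_r; lra).
    assert (M * eta * H <= S / 2 * H) by (apply Rmult_le_compat_r; lra).
    nra. }
  assert (HE8 : S * S * E <= 8 * M * eta * H).
  { assert (S * S * E <= S * S * (eta * (2 * H + D))) by (apply Rmult_le_compat_l; nra).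
    assert (S * eta * (S * D) <= S * eta * (6 * M * H)) by (apply Rmult_le_compat_l; nra).
    assert (S * S * eta * H <= M * eta * H).
    { apply Rmult_le_compat_r; [lra|]. apply Rmult_le_compat_r; [lra|]. nra. }
    assert (S * (eta * (6 * M * H)) <= 1 * (eta * (6 * M * H))).
    { apply Rmult_le_compat_r; [|lra]. apply Rmult_le_pos; [lra|]. nra. }
    nra. }
  apply (Rmult_le_reg_l (S * S * S)); [repeat apply Rmult_lt_0_compat; lra|].
  assert (S * S * (S * err) <= S * S * (M * E)) by (apply Rmult_le_compat_l; nra).
  assert (M * (S * S * E) <= M * (8 * M * eta * H)) by (apply Rmult_le_compat_l; lra).
  assert (8 * (M * M) * eta * H <= eps * (S * S * S) * H) by (apply Rmult_le_compat_r; lra).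
  nra.
Qed.

Lemma Rabs_le_norm2_l (x y : R) : Rabs x <= norm2 x y.
Proof. unfold norm2. rewrite <- sqrt_Rsqr_abs. apply sqrt_le_1_alt. unfold Rsqr. nra. Qed.

Lemma Rabs_le_norm2_r (x y : R) : Rabs y <= norm2 x y.
Proof. unfold norm2. rewrite <- sqrt_Rsqr_abs. apply sqrt_le_1_alt. unfold Rsqr. nra. Qed.

Lemma norm2_le_sum_Rabs (x y : R) : norm2 x y <= Rabs x + Rabs y.
Proof.
  unfold norm2. pose proof (Rabs_pos x). pose proof (Rabs_pos y).
  rewrite <- (sqrt_square (Rabs x + Rabs y)) by lra. apply sqrt_le_1_alt.
  assert (x * x = Rabs x * Rabs x) by (rewrite <- Rabs_mult, Rabs_pos_eq; nra).
  assert (y * y = Rabs y * Rabs y) by (rewrite <- Rabs_mult, Rabs_pos_eq; nra).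
  nra.
Qed.

Lemma has_jacobian_of_l1 (G : R * R -> R * R) (p : R * R) (J : mat2) :
  (forall eps, 0 < eps -> exists dl, 0 < dl /\ forall h1 h2,
     Rabs h1 <= dl -> Rabs h2 <= dl ->
     Rabs (fst (G (fst p + h1, snd p + h2)) - fst (G p) - (m11 J * h1 + m12 J * h2)) +
     Rabs (snd (G (fst p + h1, snd p + h2)) - snd (G p) - (m21 J * h1 + m22 J * h2))
     <= eps * (Rabs h1 + Rabs h2)) ->
  has_jacobian G p J.
Proof.
  intros Hl1 eps Heps.
  destruct (Hl1 (eps / 2) ltac:(lra)) as [dl [Hdl Hbound]].
  exists dl. split; [exact Hdl|]. intros h1 h2 Hh. cbv zeta.
  pose proof (Rabs_le_norm2_l h1 h2). pose proof (Rabs_le_norm2_r h1 h2).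
  specialize (Hbound h1 h2 ltac:(lra) ltac:(lra)).
  eapply Rle_trans; [apply norm2_le_sum_Rabs|].
  eapply Rle_trans; [exact Hbound|]. nra.
Qed.

Lemma has_jacobian_locally_constant (G : R * R -> R * R) (p : R * R) (dl : R) : 0 < dl ->
  (forall h1 h2, norm2 h1 h2 < dl -> G (fst p + h1, snd p + h2) = G p) ->
  has_jacobian G p (Mat2 0 0 0 0).
Proof.
  intros Hdl Hconst eps Heps. exists dl. split; [exact Hdl|].
  intros h1 h2 Hh. cbv zeta. rewrite (Hconst h1 h2 Hh). simpl.
  replace (fst (G p) - fst (G p) - (0 * h1 + 0 * h2)) with 0 by ring.
  replace (snd (G p) - snd (G p) - (0 * h1 + 0 * h2)) with 0 by ring.
  unfold norm2 at 1. rewrite Rmult_0_l, Rplus_0_l, sqrt_0.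
  pose proof (sqrt_pos (h1 * h1 + h2 * h2)). unfold norm2. nra.
Qed.

(* [a + i b] is a root of the characteristic polynomial: real and imaginary parts. *)
Lemma eigenvalue_char_eq (J : mat2) (a b : R) : is_eigenvalue J a b ->
  (m11 J - a) * (m22 J - a) - b * b - m12 J * m21 J = 0 /\
  b * ((m11 J - a) + (m22 J - a)) = 0.
Proof.
  destruct J as [p q r s].
  intros (v1r & v1i & v2r & v2i & Hnz & E1 & E2 & E3 & E4). simpl in *.
  set (Dr := (p - a) * (s - a) - b * b - q * r).
  set (Di := - b * ((p - a) + (s - a))).
  (* multiplying the eigenvector equations by the adjugate of [J - (a + i b)]
     gives [det (J - (a + i b)) v = 0], i.e. [(Dr + i Di) v = 0] *)
  set (R1 := p * v1r + q * v2r - (a * v1r - b * v1i)).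
  set (I1 := p * v1i + q * v2i - (a * v1i + b * v1r)).
  set (R2 := r * v1r + s * v2r - (a * v2r - b * v2i)).
  set (I2 := r * v1i + s * v2i - (a * v2i + b * v2r)).
  assert (R1 = 0 /\ I1 = 0 /\ R2 = 0 /\ I2 = 0) as (Z1 & Z2 & Z3 & Z4)
    by (unfold R1, I1, R2, I2; repeat split; lra).
  assert (X1 : Dr * v1r - Di * v1i = (s - a) * R1 + b * I1 - q * R2) by (unfold Dr, Di, R1, I1, R2; ring).
  assert (X2 : Dr * v1i + Di * v1r = (s - a) * I1 - b * R1 - q * I2) by (unfold Dr, Di, R1, I1, I2; ring).
  assert (X3 : Dr * v2r - Di * v2i = - r * R1 + (p - a) * R2 + b * I2) by (unfold Dr, Di, R1, R2, I2; ring).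
  assert (X4 : Dr * v2i + Di * v2r = - r * I1 + (p - a) * I2 - b * R2) by (unfold Dr, Di, I1, R2, I2; ring).
  rewrite Z1, Z2, Z3, Z4 in *.
  assert (Z : Dr * Dr + Di * Di = 0).
  { destruct Hnz as [N|[N|[N|N]]].
    - apply (Rmult_eq_reg_r v1r); [nra | exact N].
    - apply (Rmult_eq_reg_r v1i); [nra | exact N].
    - apply (Rmult_eq_reg_r v2r); [nra | exact N].
    - apply (Rmult_eq_reg_r v2i); [nra | exact N]. }
  assert (ZDr : Dr = 0) by nra. assert (ZDi : Di = 0) by nra.
  split; [exact ZDr|]. unfold Di in ZDi. lra.
Qed.

Lemma eigenvalue_zero_matrix (a b : R) : is_eigenvalue (Mat2 0 0 0 0) a b -> a = 0 /\ b = 0.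
Proof.
  intros Heig. destruct (eigenvalue_char_eq _ a b Heig) as [Er Ei]. simpl in Er, Ei.
  assert (Hab : a * b = 0) by lra.
  destruct (Rmult_integral a b Hab) as [->| ->]; split; nra.
Qed.

Lemma eigenvalue_real (J : mat2) (a b : R) : 0 < m12 J * m21 J -> is_eigenvalue J a b ->
  b = 0 /\ a * a - (m11 J + m22 J) * a + (m11 J * m22 J - m12 J * m21 J) = 0.
Proof.
  intros Hqr Heig. destruct (eigenvalue_char_eq J a b Heig) as [Er Ei].
  assert (Hb : b = 0).
  { destruct (Req_dec b 0) as [|Hb]; [assumption|]. exfalso.
    assert (Hsum : m11 J - a + (m22 J - a) = 0).
    { apply (Rmult_eq_reg_l b); [rewrite Rmult_0_r; exact Ei | exact Hb]. }
    replace (m22 J - a) with (- (m11 J - a)) in Er by lra.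
    assert (0 < b * b) by (apply Rsqr_pos_lt, Hb).
    pose proof (Rle_0_sqr (m11 J - a)). unfold Rsqr in *. nra. }
  split; [exact Hb|]. subst b. lra.
Qed.

(* Schur-Cohn conditions for a real monic quadratic [X^2 - t X + D]. *)
Lemma quadratic_root_bound (a t D : R) : a * a - t * a + D = 0 ->
  0 < 1 - t + D -> 0 < 1 + t + D -> -2 < t < 2 -> -1 < a < 1.
Proof.
  intros E H1 H2 Ht. split.
  - destruct (Rlt_or_le (-1) a) as [|Ha]; [assumption|]. exfalso.
    assert (0 <= (a + 1) * (a - 1 - t)) by nra. nra.
  - destruct (Rlt_or_le a 1) as [|Ha]; [assumption|]. exfalso.
    assert (0 <= (a - 1) * (a + 1 - t)) by nra. nra.
Qed.

Lemma eigenvalues_in_unit_disk (J : mat2) : 0 < m12 J * m21 J ->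
  0 < 1 - (m11 J + m22 J) + (m11 J * m22 J - m12 J * m21 J) ->
  0 < 1 + (m11 J + m22 J) + (m11 J * m22 J - m12 J * m21 J) ->
  -2 < m11 J + m22 J < 2 ->
  forall a b, is_eigenvalue J a b -> sqrt (a * a + b * b) < 1.
Proof.
  intros Hqr H1 H2 Ht a b Heig.
  destruct (eigenvalue_real J a b Hqr Heig) as [-> Ea].
  pose proof (quadratic_root_bound _ _ _ Ea H1 H2 Ht) as Ha.
  replace (a * a + 0 * 0) with (Rsqr a) by (unfold Rsqr; ring).
  rewrite sqrt_Rsqr_abs. apply Rabs_lt_between. lra.
Qed.

Lemma exp_mul_exp_neg (z : R) : exp z * exp (- z) = 1.
Proof. rewrite <- exp_plus, Rplus_opp_r. apply exp_0. Qed.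

Definition L (y : R) : R := 1 - exp (- y).

Lemma L_0 : L 0 = 0.
Proof. unfold L. rewrite Ropp_0, exp_0. ring. Qed.

Lemma L_increasing (x y : R) : x < y -> L x < L y.
Proof.
  intros Hxy. unfold L.
  assert (exp (- y) < exp (- x)) by (apply exp_increasing; lra). lra.
Qed.

Lemma L_lt_1 (y : R) : L y < 1.
Proof. unfold L. pose proof (exp_pos (- y)). lra. Qed.

Lemma L_le_id (y : R) : L y <= y.
Proof. unfold L. pose proof (exp_ineq1_le (- y)). lra. Qed.

Lemma L_lt_id (y : R) : y <> 0 -> L y < y.
Proof. intros Hy. unfold L. pose proof (exp_ineq1 (- y) ltac:(lra)). lra. Qed.

Lemma L_lower_bound (y : R) : 0 <= y -> y <= (1 + y) * L y.
Proof.
  intros Hy. unfold L.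
  pose proof (exp_ineq1_le y). pose proof (exp_mul_exp_neg y).
  pose proof (exp_pos (- y)). nra.
Qed.

Lemma L_nonneg (y : R) : 0 <= y -> 0 <= L y.
Proof. intros Hy. rewrite <- L_0. destruct Hy as [Hy|<-]; [apply Rlt_le, L_increasing|]; lra. Qed.

Lemma exp_neg_le_1 (y : R) : 0 <= y -> exp (- y) <= 1.
Proof. intros Hy. pose proof (exp_ineq1_le y). pose proof (exp_mul_exp_neg y). pose proof (exp_pos (- y)). nra. Qed.

Lemma L_lipschitz (x y : R) : 0 <= x -> 0 <= y -> Rabs (L x - L y) <= Rabs (x - y).
Proof.
  assert (Hmono : forall a b, 0 <= a <= b -> 0 <= L b - L a <= b - a).
  { intros a b [Ha Hab].
    assert (E : L b - L a = exp (- a) * L (b - a)).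
    { unfold L. replace (- b) with (- a + - (b - a)) by ring. rewrite exp_plus. ring. }
    pose proof (exp_neg_le_1 a Ha). pose proof (exp_pos (- a)).
    pose proof (L_le_id (b - a)). pose proof (L_nonneg (b - a) ltac:(lra)). nra. }
  intros Hx Hy. destruct (Rle_or_lt x y) as [Hxy|Hxy].
  - specialize (Hmono x y (conj Hx Hxy)).
    rewrite (Rabs_minus_sym x y), (Rabs_pos_eq (y - x)) by lra. apply Rabs_le. lra.
  - assert (Hyx : 0 <= y <= x) by lra. specialize (Hmono y x Hyx).
    rewrite (Rabs_pos_eq (x - y)) by lra. apply Rabs_le. lra.
Qed.

Lemma L_derive (y : R) : is_derive L y (exp (- y)).
Proof. unfold L. auto_derive; [exact I | ring]. Qed.

Lemma L_ratio (x y : R) : 0 < x < y -> x * L y < y * L x.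
Proof.
  apply (ratio_decreasing_of_derive L (fun z => exp (- z))); [intros; apply L_derive|].
  intros z Hz. unfold L. pose proof (exp_ineq1 z ltac:(lra)). pose proof (exp_mul_exp_neg z).
  pose proof (exp_pos (- z)). nra.
Qed.

Lemma L_continuous : continuity L.
Proof. intros y. apply derivable_continuous_pt, ex_derive_Reals_0. eexists. apply L_derive. Qed.

Definition tanh_half (z : R) : R := (1 - exp (- z)) / (1 + exp (- z)).

Lemma tanh_half_0 : tanh_half 0 = 0.
Proof. unfold tanh_half. rewrite Ropp_0, exp_0. field. Qed.

Lemma tanh_half_increasing (x y : R) : x < y -> tanh_half x < tanh_half y.
Proof.
  intros Hxy. unfold tanh_half.
  assert (exp (- y) < exp (- x)) by (apply exp_increasing; lra).
  pose proof (exp_pos (- x)). pose proof (exp_pos (- y)).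
  apply Rlt_0_minus.
  replace ((1 - exp (- y)) / (1 + exp (- y)) - (1 - exp (- x)) / (1 + exp (- x)))
    with (2 * (exp (- x) - exp (- y)) / ((1 + exp (- y)) * (1 + exp (- x)))) by (field; lra).
  apply Rdiv_lt_0_compat; nra.
Qed.

Lemma tanh_half_lt_1 (z : R) : tanh_half z < 1.
Proof.
  unfold tanh_half. pose proof (exp_pos (- z)).
  assert (Hd : 0 < 1 + exp (- z)) by lra. apply (Rdiv_lt_1 _ _ Hd). lra.
Qed.

Lemma tanh_half_lower_bound (z : R) : 0 <= z -> z <= (2 + z) * tanh_half z.
Proof.
  intros Hz. unfold tanh_half.
  pose proof (exp_ineq1_le z). pose proof (exp_mul_exp_neg z). pose proof (exp_pos (- z)).
  replace ((2 + z) * ((1 - exp (- z)) / (1 + exp (- z))))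
    with ((2 + z) * (1 - exp (- z)) / (1 + exp (- z))) by (field; lra).
  apply Rle_div_r; nra.
Qed.

Lemma tanh_half_lt_half (z : R) : 0 < z -> 2 * tanh_half z < z.
Proof.
  intros Hz. unfold tanh_half. pose proof (exp_pos (- z)).
  assert (Hgap : 0 * (1 + exp (- 0)) - 2 * (1 - exp (- 0))
                 < z * (1 + exp (- z)) - 2 * (1 - exp (- z))).
  { apply (increasing_of_derive_pos (fun z => z * (1 + exp (- z)) - 2 * (1 - exp (- z)))
      (fun z => 1 - exp (- z) * (1 + z))); [lra| |].
    - intros x Hx. auto_derive; [exact I | ring].
    - intros x Hx. pose proof (exp_ineq1 x ltac:(lra)). pose proof (exp_mul_exp_neg x).
      pose proof (exp_pos (- x)). nra. }
  rewrite Ropp_0, exp_0 in Hgap.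
  apply (Rmult_lt_reg_r (1 + exp (- z))); [lra|].
  field_simplify; lra.
Qed.

(* [sinh z > z], multiplied by [2 exp (- z)] *)
Lemma sinh_gt_id_scaled (z : R) : 0 < z -> 2 * z * exp (- z) < 1 - exp (- z) * exp (- z).
Proof.
  intros Hz.
  assert (H : 1 - exp (- 0) * exp (- 0) - 2 * 0 * exp (- 0)
              < 1 - exp (- z) * exp (- z) - 2 * z * exp (- z)).
  { apply (increasing_of_derive_pos (fun z => 1 - exp (- z) * exp (- z) - 2 * z * exp (- z))
      (fun z => 2 * exp (- z) * (exp (- z) - 1 + z))); [lra| |].
    - intros x Hx. auto_derive; [exact I | ring].
    - intros x Hx. pose proof (exp_ineq1 (- x) ltac:(lra)). pose proof (exp_pos (- x)). nra. }
  rewrite Ropp_0, exp_0 in H. lra.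
Qed.

Lemma tanh_half_tangent_lt (z : R) : 0 < z -> z * (1 - tanh_half z ^ 2) < 2 * tanh_half z.
Proof.
  intros Hz. pose proof (sinh_gt_id_scaled z Hz). pose proof (exp_pos (- z)).
  unfold tanh_half.
  replace (z * (1 - ((1 - exp (- z)) / (1 + exp (- z))) ^ 2))
    with (2 * (2 * z * exp (- z)) / ((1 + exp (- z)) * (1 + exp (- z)))) by (field; lra).
  replace (2 * ((1 - exp (- z)) / (1 + exp (- z))))
    with (2 * (1 - exp (- z) * exp (- z)) / ((1 + exp (- z)) * (1 + exp (- z)))) by (field; lra).
  apply Rmult_lt_compat_r; [apply Rinv_0_lt_compat; nra | lra].
Qed.

Lemma tanh_half_derive (z : R) : is_derive tanh_half z ((1 - tanh_half z ^ 2) / 2).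
Proof.
  unfold tanh_half. pose proof (exp_pos (- z)).
  auto_derive; [lra | field; lra].
Qed.

Lemma tanh_half_ratio (x y : R) : 0 < x < y -> x * tanh_half y < y * tanh_half x.
Proof.
  apply (ratio_decreasing_of_derive tanh_half (fun z => (1 - tanh_half z ^ 2) / 2));
    [intros; apply tanh_half_derive|].
  intros z Hz. pose proof (tanh_half_tangent_lt z Hz). lra.
Qed.

Lemma tanh_half_continuous : continuity tanh_half.
Proof.
  intros y. apply derivable_continuous_pt, ex_derive_Reals_0. eexists. apply tanh_half_derive.
Qed.

Lemma tanh_half_eq_iff (z x : R) : -1 < x ->
  tanh_half z = x <-> exp (- z) = (1 - x) / (1 + x).
Proof.
  intros Hx. unfold tanh_half. pose proof (exp_pos (- z)). split; intros E.
  - rewrite <- E. field. lra.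
  - rewrite E. field. lra.
Qed.

(* [saturating_ratio]: [f z / z] strictly decreases on [(0, +oo)]; this makes
   positive solutions of [x = f (a y)], [y = f (b x)] unique. *)
Record saturating (f : R -> R) : Prop := {
  saturating_0 : f 0 = 0;
  saturating_increasing : forall x y, x < y -> f x < f y;
  saturating_ratio : forall x y, 0 < x < y -> x * f y < y * f x;
  saturating_lt_1 : forall z, f z < 1;
  saturating_continuous : continuity f }.

Lemma L_saturating : saturating L.
Proof. split; [exact L_0 | exact L_increasing | exact L_ratio | exact L_lt_1 | exact L_continuous]. Qed.

Lemma tanh_half_saturating : saturating tanh_half.
Proof.
  split; [exact tanh_half_0 | exact tanh_half_increasing | exact tanh_half_ratio
         | exact tanh_half_lt_1 | exact tanh_half_continuous].
Qed.

Section CoupledSystem.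

Variable f : R -> R.
Hypothesis Hf : saturating f.
Let f_0 := saturating_0 f Hf.
Let f_increasing := saturating_increasing f Hf.
Let f_ratio := saturating_ratio f Hf.
Let f_lt_1 := saturating_lt_1 f Hf.

Definition coupled_solution (a b x y : R) : Prop :=
  0 < x /\ 0 < y /\ x = f (a * y) /\ y = f (b * x).

Definition coupled_map (a b s : R) : R := f (a * f (b * s)).

Let f_pos (z : R) : 0 < z -> 0 < f z.
Proof. intros Hz. rewrite <- f_0. now apply f_increasing. Qed.

Let f_nonneg (z : R) : 0 <= z -> 0 <= f z.
Proof. intros [Hz|<-]; [apply Rlt_le, f_pos, Hz | rewrite f_0; lra]. Qed.

Lemma coupled_solution_unique (a b x1 y1 x2 y2 : R) : 0 < a -> 0 < b ->
  coupled_solution a b x1 y1 -> coupled_solution a b x2 y2 -> x1 = x2 /\ y1 = y2.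
Proof.
  intros Ha Hb.
  (* a smaller first coordinate would force a smaller second one, and then
     the strict decrease of [f z / z] makes both ratios [x / y] move the wrong way *)
  assert (Hnot_lt : forall x1 y1 x2 y2, coupled_solution a b x1 y1 ->
            coupled_solution a b x2 y2 -> ~ x1 < x2).
  { intros u1 v1 u2 v2 (Hu1 & Hv1 & Eu1 & Ev1) (Hu2 & Hv2 & Eu2 & Ev2) Hu.
    assert (Hv : v1 < v2) by (rewrite Ev1, Ev2; apply f_increasing; nra).
    pose proof (f_ratio (a * v1) (a * v2) ltac:(split; nra)) as Ra.
    pose proof (f_ratio (b * u1) (b * u2) ltac:(split; nra)) as Rb.
    rewrite <- Eu1, <- Eu2 in Ra. rewrite <- Ev1, <- Ev2 in Rb. nra. }
  intros S1 S2.
  assert (Ex : x1 = x2).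
  { destruct (Rtotal_order x1 x2) as [H|[H|H]]; [| exact H |].
    - exfalso. exact (Hnot_lt _ _ _ _ S1 S2 H).
    - exfalso. exact (Hnot_lt _ _ _ _ S2 S1 H). }
  split; [exact Ex|].
  destruct S1 as (_ & _ & _ & E1). destruct S2 as (_ & _ & _ & E2). congruence.
Qed.

Lemma coupled_solution_iff_fixed_point (a b x y : R) : 0 < b ->
  coupled_solution a b x y <-> 0 < x /\ x = coupled_map a b x /\ y = f (b * x).
Proof.
  intros Hb. unfold coupled_solution, coupled_map. split.
  - intros (Hx & Hy & Ex & Ey). rewrite <- Ey. auto.
  - intros (Hx & Ex & Ey). rewrite <- Ey in Ex. repeat split; auto.
    rewrite Ey. apply f_pos. nra.
Qed.

Lemma coupled_map_ratio (a b s t : R) : 0 < a -> 0 < b -> 0 < s < t ->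
  s * coupled_map a b t < t * coupled_map a b s.
Proof.
  intros Ha Hb [Hs Hst]. unfold coupled_map.
  set (p := f (b * s)). set (q := f (b * t)).
  assert (Hp : 0 < p) by (apply f_pos; nra).
  assert (Hpq : p < q) by (apply f_increasing; nra).
  pose proof (f_ratio (b * s) (b * t) ltac:(split; nra)) as Rb. fold p q in Rb.
  pose proof (f_ratio (a * p) (a * q) ltac:(split; nra)) as Ra.
  pose proof (f_pos (a * p) ltac:(nra)). pose proof (f_pos (a * q) ltac:(nra)).
  (* multiply [s q < t p] by [p f (a q) < q f (a p)] and cancel [p q] *)
  assert (Hprod : (s * q) * (p * f (a * q)) < (t * p) * (q * f (a * p))).
  { apply Rmult_le_0_lt_compat; nra. }
  apply (Rmult_lt_reg_l (p * q)); [nra|]. lra.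
Qed.

Lemma coupled_map_gt_iff (a b x s : R) : 0 < a -> 0 < b -> 0 < x ->
  x = coupled_map a b x -> 0 < s -> s < coupled_map a b s <-> s < x.
Proof.
  intros Ha Hb Hx Ex Hs. split; intros H.
  - destruct (Rtotal_order s x) as [|[<-|Hxs]]; [assumption | lra |].
    pose proof (coupled_map_ratio a b x s Ha Hb (conj Hx Hxs)). nra.
  - pose proof (coupled_map_ratio a b s x Ha Hb (conj Hs H)). nra.
Qed.

Lemma coupled_map_lt_iff (a b x s : R) : 0 < a -> 0 < b -> 0 < x ->
  x = coupled_map a b x -> 0 < s -> coupled_map a b s < s <-> x < s.
Proof.
  intros Ha Hb Hx Ex Hs. split; intros H.
  - destruct (Rtotal_order s x) as [Hsx|[->|]]; [| lra | assumption].
    pose proof (coupled_map_ratio a b s x Ha Hb (conj Hs Hsx)). nra.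
  - pose proof (coupled_map_ratio a b x s Ha Hb (conj Hx H)). nra.
Qed.

Lemma coupled_solution_none (a b m x y : R) : 0 < m -> 0 < a -> 0 < b ->
  (forall z, 0 < z -> m * f z < z) -> a * b <= m * m -> ~ coupled_solution a b x y.
Proof.
  intros Hm Ha Hb Hup Hab (Hx & Hy & Ex & Ey).
  pose proof (Hup (a * y) ltac:(nra)) as Hx'. pose proof (Hup (b * x) ltac:(nra)) as Hy'.
  rewrite <- Ex in Hx'. rewrite <- Ey in Hy'.
  assert (Hprod : (m * x) * (m * y) < (a * y) * (b * x)) by (apply Rmult_le_0_lt_compat; nra).
  assert (0 <= (m * m - a * b) * (x * y)) by (apply Rmult_le_pos; nra).
  nra.
Qed.

Lemma coupled_solution_exists (a b m : R) : 0 < m -> 0 < a -> 0 < b ->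
  (forall z, 0 <= z -> z <= (m + z) * f z) -> m * m < a * b ->
  exists x y, coupled_solution a b x y /\ x < 1 /\ y < 1.
Proof.
  intros Hm Ha Hb Hlow Hab.
  (* the lower bound makes [coupled_map a b s > s] at this small [s] *)
  set (s := (a * b - m * m) / (2 * (m * b + a * b))).
  assert (Hs : 0 < s) by (apply Rdiv_lt_0_compat; nra).
  assert (Es : s * (m * b + a * b) = (a * b - m * m) / 2) by (unfold s; field; nra).
  assert (Hs1 : s < 1) by (apply (Rmult_lt_reg_r (m * b + a * b)); nra).
  assert (Hstart : s < coupled_map a b s).
  { unfold coupled_map. set (t := f (b * s)).
    pose proof (Hlow (b * s) ltac:(nra)) as Ht. fold t in Ht.
    assert (0 < t) by (apply f_pos; nra).
    pose proof (Hlow (a * t) ltac:(nra)) as Hat.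
    destruct (Rlt_or_le s (f (a * t))) as [|Hle]; [assumption | exfalso].
    assert (a * t * (1 - s) <= m * s) by nra.
    assert (a * (1 - s) * (b * s) <= a * (1 - s) * ((m + b * s) * t))
      by (apply Rmult_le_compat_l; nra).
    nra. }
  assert (Hcont : continuity (fun z => z - coupled_map a b z)).
  { apply continuity_minus; [apply derivable_continuous, derivable_id|].
    intros z. unfold coupled_map.
    apply (continuity_pt_comp (fun z => a * f (b * z)) f); [|apply (saturating_continuous f Hf)].
    apply continuity_pt_scal.
    apply (continuity_pt_comp (fun z => b * z) f); [|apply (saturating_continuous f Hf)].
    apply continuity_pt_scal, derivable_continuous_pt, derivable_pt_id. }
  destruct (IVT (fun z => z - coupled_map a b z) s 1 Hcont) as [x [Hx Ex]];
    [lra | lra | pose proof (f_lt_1 (a * f (b * 1))); unfold coupled_map; lra |].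
  assert (Hx1 : x < 1).
  { destruct Hx as [_ [Hx1 | ->]]; [assumption|].
    pose proof (f_lt_1 (a * f (b * 1))). unfold coupled_map in Ex. lra. }
  exists x, (f (b * x)). split; [|split; [exact Hx1 | apply f_lt_1]].
  apply coupled_solution_iff_fixed_point; [exact Hb|]. repeat split; lra.
Qed.

Hypothesis f_lipschitz : forall x y, 0 <= x -> 0 <= y -> Rabs (f x - f y) <= Rabs (x - y).

Lemma coupled_map_perturb (a b a0 b0 s : R) : 0 <= a -> 0 <= b -> 0 <= a0 -> 0 <= b0 -> 0 <= s ->
  Rabs (coupled_map a b s - coupled_map a0 b0 s) <= Rabs (a - a0) + a0 * s * Rabs (b - b0).
Proof.
  intros Ha Hb Ha0 Hb0 Hs. unfold coupled_map.
  set (p := f (b * s)). set (p0 := f (b0 * s)).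
  assert (Hp : 0 <= p < 1) by (split; [apply f_nonneg; nra | apply f_lt_1]).
  assert (Hp0 : 0 <= p0 < 1) by (split; [apply f_nonneg; nra | apply f_lt_1]).
  assert (Hpp : Rabs (p - p0) <= s * Rabs (b - b0)).
  { eapply Rle_trans; [apply f_lipschitz; nra|].
    replace (b * s - b0 * s) with (s * (b - b0)) by ring.
    rewrite Rabs_mult, (Rabs_pos_eq s) by lra. lra. }
  eapply Rle_trans; [apply f_lipschitz; nra|].
  replace (a * p - a0 * p0) with ((a - a0) * p + a0 * (p - p0)) by ring.
  eapply Rle_trans; [apply Rabs_triang|].
  rewrite !Rabs_mult, (Rabs_pos_eq p), (Rabs_pos_eq a0) by lra.
  pose proof (Rabs_pos (a - a0)). pose proof (Rabs_pos (p - p0)). nra.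
Qed.

Lemma coupled_map_fixed_point_stable (a0 b0 x0 e : R) : 0 < a0 -> 0 < b0 -> x0 < 1 ->
  x0 = coupled_map a0 b0 x0 -> 0 < e < x0 ->
  exists dl, 0 < dl /\ forall a b x, 0 < a -> 0 < b ->
    Rabs (a - a0) <= dl -> Rabs (b - b0) <= dl -> 0 < x -> x = coupled_map a b x ->
    Rabs (x - x0) < e.
Proof.
  intros Ha0 Hb0 Hx01 Fx0 He.
  (* [coupled_map a0 b0 - id] changes sign strictly at [s1 < x0 < s2], with a
     margin [g] that survives small perturbations of [(a0, b0)] *)
  set (s1 := x0 - e). set (s2 := x0 + e).
  set (g := Rmin (coupled_map a0 b0 s1 - s1) (s2 - coupled_map a0 b0 s2)).
  assert (Hg1 : g <= coupled_map a0 b0 s1 - s1) by apply Rmin_l.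
  assert (Hg2 : g <= s2 - coupled_map a0 b0 s2) by apply Rmin_r.
  assert (Hg : 0 < g).
  { apply Rmin_pos; apply Rlt_0_minus.
    - apply (coupled_map_gt_iff a0 b0 x0); unfold s1; lra.
    - apply (coupled_map_lt_iff a0 b0 x0); unfold s2; lra. }
  set (dl := g / (2 * (1 + 2 * a0))).
  assert (Hdl : 0 < dl) by (apply Rdiv_lt_0_compat; lra).
  assert (Edl : dl * (2 * (1 + 2 * a0)) = g) by (unfold dl; field; lra).
  exists dl. split; [exact Hdl|].
  intros a b x Ha Hb Hda Hdb Hx Fx.
  assert (Hpert : forall s, 0 <= s <= 2 ->
            Rabs (coupled_map a b s - coupled_map a0 b0 s) < g).
  { intros s Hs. eapply Rle_lt_trans; [apply coupled_map_perturb; lra|].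
    assert (a0 * s * Rabs (b - b0) <= a0 * 2 * dl).
    { apply Rmult_le_compat; [nra | apply Rabs_pos | nra | lra]. }
    assert (0 < a0 * dl) by nra. lra. }
  assert (Hs1x : s1 < x).
  { apply (coupled_map_gt_iff a b x); [lra | lra | lra | exact Fx | unfold s1; lra |].
    pose proof (Hpert s1 ltac:(unfold s1; lra)) as H. apply Rabs_lt_between in H. lra. }
  assert (Hxs2 : x < s2).
  { apply (coupled_map_lt_iff a b x); [lra | lra | lra | exact Fx | unfold s2; lra |].
    pose proof (Hpert s2 ltac:(unfold s2; lra)) as H. apply Rabs_lt_between in H. lra. }
  apply Rabs_lt_between. unfold s1, s2 in *. lra.
Qed.

Lemma coupled_solution_continuous (a0 b0 x0 y0 : R) : 0 < a0 -> 0 < b0 ->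
  coupled_solution a0 b0 x0 y0 -> forall eta, 0 < eta -> exists dl, 0 < dl /\
  forall a b x y, 0 < a -> 0 < b -> Rabs (a - a0) <= dl -> Rabs (b - b0) <= dl ->
    coupled_solution a b x y -> Rabs (x - x0) < eta /\ Rabs (y - y0) < eta.
Proof.
  intros Ha0 Hb0 S0 eta Heta.
  pose proof S0 as (Hx0 & Hy0 & Ex0 & Ey0).
  assert (Hx01 : x0 < 1) by (rewrite Ex0; apply f_lt_1).
  apply coupled_solution_iff_fixed_point in S0 as (_ & Fx0 & _); [|lra].
  set (e := Rmin (x0 / 2) (eta / (2 * (1 + b0)))).
  assert (He : 0 < e) by (apply Rmin_pos; apply Rdiv_lt_0_compat; lra).
  assert (He1 : e <= x0 / 2) by apply Rmin_l.
  assert (He2 : e * (2 * (1 + b0)) <= eta).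
  { pose proof (Rmin_r (x0 / 2) (eta / (2 * (1 + b0)))) as H. fold e in H.
    apply Rle_div_r in H; lra. }
  destruct (coupled_map_fixed_point_stable a0 b0 x0 e Ha0 Hb0 Hx01 Fx0 ltac:(lra))
    as [dx [Hdx Hstable]].
  exists (Rmin dx (eta / 2)). split; [apply Rmin_pos; lra|].
  intros a b x y Ha Hb Hda Hdb S.
  pose proof (Rmin_l dx (eta / 2)). pose proof (Rmin_r dx (eta / 2)).
  pose proof S as (Hx & Hy & Ex & Ey).
  assert (Hx1 : x < 1) by (rewrite Ex; apply f_lt_1).
  apply coupled_solution_iff_fixed_point in S as (_ & Fx & _); [|lra].
  assert (Hxx0 : Rabs (x - x0) < e) by (apply (Hstable a b); lra).
  split; [nra|].
  rewrite Ey, Ey0. eapply Rle_lt_trans; [apply f_lipschitz; nra|].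
  replace (b * x - b0 * x0) with ((b - b0) * x + b0 * (x - x0)) by ring.
  eapply Rle_lt_trans; [apply Rabs_triang|].
  rewrite !Rabs_mult, (Rabs_pos_eq x), (Rabs_pos_eq b0) by lra.
  assert (Rabs (b - b0) * x <= eta / 2) by (pose proof (Rabs_pos (b - b0)); nra).
  assert (b0 * Rabs (x - x0) <= b0 * e) by (apply Rmult_le_compat_l; lra).
  nra.
Qed.

Variable f' : R -> R.
Hypothesis f_derive : forall y, is_derive f y (f' y).
Hypothesis f'_nonneg : forall y, 0 <= f' y.

Lemma coupled_product_increment (c u0 h Q0 q x x0 lam eta dl : R) : 0 < c -> 0 < u0 ->
  x = f (c * (Q0 + q)) -> x0 = f (c * Q0) -> Rabs (x - x0) <= eta -> u0 * (lam * c) <= eta ->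
  Rabs (c * q) < dl ->
  (forall t, Rabs t < dl -> Rabs (f (c * Q0 + t) - f (c * Q0) - f' (c * Q0) * t) <= lam * Rabs t) ->
  Rabs ((u0 + h) * x - u0 * x0 - x0 * h - c * u0 * f' (c * Q0) * q) <= eta * (Rabs h + Rabs q).
Proof.
  intros Hc Hu0 Ex Ex0 Hxx0 Hlam Hq Hlo.
  set (rho := f (c * Q0 + c * q) - f (c * Q0) - f' (c * Q0) * (c * q)).
  replace ((u0 + h) * x - u0 * x0 - x0 * h - c * u0 * f' (c * Q0) * q)
    with (h * (x - x0) + u0 * rho)
    by (unfold rho; rewrite <- Rmult_plus_distr_l, <- Ex, <- Ex0; ring).
  pose proof (Hlo (c * q) Hq) as Hrho. fold rho in Hrho.
  rewrite Rabs_mult, (Rabs_pos_eq c) in Hrho by lra.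
  eapply Rle_trans; [apply Rabs_triang|]. rewrite !Rabs_mult, (Rabs_pos_eq u0) by lra.
  assert (Rabs h * Rabs (x - x0) <= Rabs h * eta)
    by (apply Rmult_le_compat_l; [apply Rabs_pos | lra]).
  assert (u0 * Rabs rho <= u0 * (lam * (c * Rabs q))) by (apply Rmult_le_compat_l; lra).
  assert (u0 * (lam * c) * Rabs q <= eta * Rabs q)
    by (apply Rmult_le_compat_r; [apply Rabs_pos | lra]).
  lra.
Qed.

Lemma coupled_products_continuous (c d u0 v0 x0 y0 : R) : 0 < c -> 0 < d -> 0 < u0 -> 0 < v0 ->
  coupled_solution (c * v0) (d * u0) x0 y0 -> forall zeta, 0 < zeta -> exists dl, 0 < dl /\
  forall h1 h2 x y, Rabs h1 <= dl -> Rabs h2 <= dl ->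
    coupled_solution (c * (v0 + h2)) (d * (u0 + h1)) x y ->
    Rabs (x - x0) < zeta /\ Rabs (y - y0) < zeta /\
    Rabs ((u0 + h1) * x - u0 * x0) <= zeta * (1 + u0) /\
    Rabs ((v0 + h2) * y - v0 * y0) <= zeta * (1 + v0).
Proof.
  intros Hc Hd Hu0 Hv0 S0 zeta Hzeta.
  destruct (coupled_solution_continuous (c * v0) (d * u0) x0 y0 ltac:(nra) ltac:(nra) S0
              zeta Hzeta) as [dc [Hdc Hcont]].
  set (dl := Rmin (Rmin (dc / (c + d)) zeta) (Rmin (u0 / 2) (v0 / 2))).
  assert (Hdl1 : dl * (c + d) <= dc).
  { apply Rle_div_r; [lra|]. eapply Rle_trans; [apply Rmin_l | apply Rmin_l]. }
  assert (Hdl2 : dl <= zeta) by (eapply Rle_trans; [apply Rmin_l | apply Rmin_r]).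
  assert (Hdl3 : dl <= u0 / 2) by (eapply Rle_trans; [apply Rmin_r | apply Rmin_l]).
  assert (Hdl4 : dl <= v0 / 2) by (eapply Rle_trans; [apply Rmin_r | apply Rmin_r]).
  assert (Hdl0 : 0 < dl) by (apply Rmin_pos; apply Rmin_pos; try apply Rdiv_lt_0_compat; lra).
  exists dl. split; [exact Hdl0|].
  intros h1 h2 x y Hh1 Hh2 S.
  pose proof (proj1 (Rabs_le_between h1 dl) Hh1).
  pose proof (proj1 (Rabs_le_between h2 dl) Hh2).
  assert (Ha : Rabs (c * (v0 + h2) - c * v0) <= dc).
  { replace (c * (v0 + h2) - c * v0) with (c * h2) by ring.
    rewrite Rabs_mult, (Rabs_pos_eq c) by lra.
    assert (c * Rabs h2 <= c * dl) by (apply Rmult_le_compat_l; lra). nra. }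
  assert (Hb : Rabs (d * (u0 + h1) - d * u0) <= dc).
  { replace (d * (u0 + h1) - d * u0) with (d * h1) by ring.
    rewrite Rabs_mult, (Rabs_pos_eq d) by lra.
    assert (d * Rabs h1 <= d * dl) by (apply Rmult_le_compat_l; lra). nra. }
  assert (Ha' : 0 < c * (v0 + h2)) by nra. assert (Hb' : 0 < d * (u0 + h1)) by nra.
  destruct (Hcont _ _ x y Ha' Hb' Ha Hb S) as [Hxc Hyc].
  pose proof S as (Hx & Hy & Ex & Ey).
  assert (Hx1 : x < 1) by (rewrite Ex; apply f_lt_1).
  assert (Hy1 : y < 1) by (rewrite Ey; apply f_lt_1).
  split; [exact Hxc|]. split; [exact Hyc|].
  apply Rabs_lt_between in Hxc. apply Rabs_lt_between in Hyc.
  split; apply Rabs_le_between.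
  - replace ((u0 + h1) * x - u0 * x0) with (h1 * x + u0 * (x - x0)) by ring. nra.
  - replace ((v0 + h2) * y - v0 * y0) with (h2 * y + v0 * (y - y0)) by ring. nra.
Qed.

(* The increments of the products [u x], [v y] satisfy the linearization of
   [P = u f (c Q)], [Q = v f (d P)] up to [o(|du| + |dv| + |dP| + |dQ|)]. *)
Lemma coupled_products_approx_linear (c d u0 v0 x0 y0 : R) :
  0 < c -> 0 < d -> 0 < u0 -> 0 < v0 -> coupled_solution (c * v0) (d * u0) x0 y0 ->
  forall eta, 0 < eta -> exists dl, 0 < dl /\
  forall h1 h2 x y, Rabs h1 <= dl -> Rabs h2 <= dl ->
    coupled_solution (c * (v0 + h2)) (d * (u0 + h1)) x y ->
    let p := (u0 + h1) * x - u0 * x0 in let q := (v0 + h2) * y - v0 * y0 in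
    Rabs (p - x0 * h1 - c * u0 * f' (c * (v0 * y0)) * q) <= eta * (Rabs h1 + Rabs h2 + Rabs q) /\
    Rabs (q - y0 * h2 - d * v0 * f' (d * (u0 * x0)) * p) <= eta * (Rabs h1 + Rabs h2 + Rabs p).
Proof.
  intros Hc Hd Hu0 Hv0 S0 eta Heta.
  pose proof S0 as (Hx0 & Hy0 & Ex0 & Ey0).
  set (lam := eta / (1 + c * u0 + d * v0)).
  assert (Hlam : 0 < lam) by (apply Rdiv_lt_0_compat; nra).
  assert (Hlam1 : lam * (1 + c * u0 + d * v0) = eta) by (unfold lam; field; nra).
  assert (0 <= lam * (c * u0)) by (apply Rmult_le_pos; nra).
  assert (0 <= lam * (d * v0)) by (apply Rmult_le_pos; nra).
  assert (Hlamc : u0 * (lam * c) <= eta) by nra.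
  assert (Hlamd : v0 * (lam * d) <= eta) by nra.
  set (P0 := u0 * x0). set (Q0 := v0 * y0).
  destruct (is_derive_little_o f (c * Q0) _ lam (f_derive _) Hlam) as [d1 [Hd1 Hlo1]].
  destruct (is_derive_little_o f (d * P0) _ lam (f_derive _) Hlam) as [d2 [Hd2 Hlo2]].
  set (zeta := Rmin eta (Rmin (d1 / (2 * c * (1 + v0))) (d2 / (2 * d * (1 + u0))))).
  assert (Hz1 : zeta <= eta) by apply Rmin_l.
  assert (Hz2 : zeta * (2 * c * (1 + v0)) <= d1).
  { apply Rle_div_r; [nra|]. eapply Rle_trans; [apply Rmin_r | apply Rmin_l]. }
  assert (Hz3 : zeta * (2 * d * (1 + u0)) <= d2).
  { apply Rle_div_r; [nra|]. eapply Rle_trans; [apply Rmin_r | apply Rmin_r]. }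
  assert (Hzeta : 0 < zeta).
  { apply Rmin_pos; [lra|]. apply Rmin_pos; apply Rdiv_lt_0_compat; nra. }
  destruct (coupled_products_continuous c d u0 v0 x0 y0 Hc Hd Hu0 Hv0 S0 zeta Hzeta)
    as [dl [Hdl Hnear]].
  exists dl. split; [exact Hdl|].
  intros h1 h2 x y Hh1 Hh2 S p q.
  destruct (Hnear h1 h2 x y Hh1 Hh2 S) as (Hxc & Hyc & Hp & Hq).
  change (Rabs p <= zeta * (1 + u0)) in Hp. change (Rabs q <= zeta * (1 + v0)) in Hq.
  pose proof S as (_ & _ & Ex & Ey).
  split.
  - eapply Rle_trans; [apply (coupled_product_increment c u0 h1 Q0 q x x0 lam eta d1); try lra|].
    + rewrite Ex. f_equal. unfold q, Q0. ring.
    + rewrite Ex0. f_equal. unfold Q0. ring.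
    + rewrite Rabs_mult, Rabs_pos_eq by lra. nra.
    + exact Hlo1.
    + apply Rmult_le_compat_l; [lra|]. pose proof (Rabs_pos h2). lra.
  - eapply Rle_trans; [apply (coupled_product_increment d v0 h2 P0 p y y0 lam eta d2); try lra|].
    + rewrite Ey. f_equal. unfold p, P0. ring.
    + rewrite Ey0. f_equal. unfold P0. ring.
    + rewrite Rabs_mult, Rabs_pos_eq by lra. nra.
    + exact Hlo2.
    + apply Rmult_le_compat_l; [lra|]. pose proof (Rabs_pos h1). lra.
Qed.

(* The derivative solves [dP = x0 du + al dQ], [dQ = y0 dv + be dP]. *)
Lemma coupled_products_linearization (c d u0 v0 x0 y0 al be : R) :
  0 < c -> 0 < d -> 0 < u0 -> 0 < v0 -> coupled_solution (c * v0) (d * u0) x0 y0 ->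
  al = c * u0 * f' (c * (v0 * y0)) -> be = d * v0 * f' (d * (u0 * x0)) -> 0 < 1 - al * be ->
  forall eps, 0 < eps -> exists dl, 0 < dl /\
  forall h1 h2 x y, Rabs h1 <= dl -> Rabs h2 <= dl ->
    coupled_solution (c * (v0 + h2)) (d * (u0 + h1)) x y ->
    Rabs ((u0 + h1) * x - u0 * x0 - (x0 * h1 + al * y0 * h2) / (1 - al * be)) +
    Rabs ((v0 + h2) * y - v0 * y0 - (be * x0 * h1 + y0 * h2) / (1 - al * be))
    <= eps * (Rabs h1 + Rabs h2).
Proof.
  intros Hc Hd Hu0 Hv0 S0 Hal Hbe HS eps Heps.
  pose proof S0 as (Hx0 & Hy0 & Ex0 & Ey0).
  assert (Hx01 : x0 < 1) by (rewrite Ex0; apply f_lt_1).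
  assert (Hy01 : y0 < 1) by (rewrite Ey0; apply f_lt_1).
  assert (Hal0 : 0 <= al) by (rewrite Hal; apply Rmult_le_pos; [nra | apply f'_nonneg]).
  assert (Hbe0 : 0 <= be) by (rewrite Hbe; apply Rmult_le_pos; [nra | apply f'_nonneg]).
  destruct (linear_system_perturb al be x0 y0 eps) as [eta [Heta Hlin]]; try lra.
  destruct (coupled_products_approx_linear c d u0 v0 x0 y0 Hc Hd Hu0 Hv0 S0 eta Heta)
    as [dl [Hdl Happrox]].
  exists dl. split; [exact Hdl|].
  intros h1 h2 x y Hh1 Hh2 S.
  destruct (Happrox h1 h2 x y Hh1 Hh2 S) as [He1 He2]. rewrite <- Hal, <- Hbe in *.
  set (p := (u0 + h1) * x - u0 * x0) in *. set (q := (v0 + h2) * y - v0 * y0) in *.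
  apply (Hlin h1 h2 p q (p - x0 * h1 - al * q) (q - y0 * h2 - be * p)); [ring | ring | |];
    assumption.
Qed.

End CoupledSystem.

Lemma sqrt_mul_le_1_iff (x B : R) : 0 <= x -> 0 <= B -> sqrt x * B <= 1 <-> B * B * x <= 1.
Proof.
  intros Hx HB. pose proof (sqrt_sqrt x Hx). pose proof (sqrt_pos x).
  assert (E : B * B * x = (sqrt x * B) * (sqrt x * B)) by nra.
  rewrite E. assert (0 <= sqrt x * B) by nra. split; intros Hle; nra.
Qed.

Lemma theta_system_iff (B k aL aR tL tR : R) :
  theta_system B k aL aR tL tR <-> coupled_solution L (B * sqrt k * aR) (B / sqrt k * aL) tL tR.
Proof. unfold theta_system, coupled_solution, L. split; intros (H1 & H2 & H3 & H4); lra. Qed.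

Lemma F_below_threshold (B k aL aR : R) : sqrt (aL * aR) * B <= 1 -> F B k (aL, aR) = (1/2, 1/2).
Proof.
  intros Hle. unfold F, theta. simpl. destruct (Rle_dec (sqrt (aL * aR) * B) 1); [|lra].
  simpl. f_equal; field.
Qed.

Lemma theta_of_solution (B k aL aR tL tR : R) : 0 < k -> 0 < B -> 0 < aL -> 0 < aR ->
  theta_system B k aL aR tL tR -> theta B k aL aR = (tL, tR).
Proof.
  intros Hk HB HL HR Hsys.
  assert (Hsk : 0 < sqrt k) by (apply sqrt_lt_R0; lra).
  assert (Ha : 0 < B * sqrt k * aR) by (repeat apply Rmult_lt_0_compat; lra).
  assert (Hb : 0 < B / sqrt k * aL) by (apply Rmult_lt_0_compat; [apply Rdiv_lt_0_compat|]; lra).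
  assert (Hab : B * sqrt k * aR * (B / sqrt k * aL) = B * B * (aL * aR)) by (field; lra).
  (* a positive solution can only exist above the threshold, since [L z < z] *)
  assert (Hhigh : ~ sqrt (aL * aR) * B <= 1).
  { rewrite sqrt_mul_le_1_iff by nra. intros Hle.
    apply (coupled_solution_none L (B * sqrt k * aR) (B / sqrt k * aL) 1 tL tR); try lra.
    - intros z Hz. rewrite Rmult_1_l. apply L_lt_id. lra.
    - now apply theta_system_iff. }
  unfold theta. destruct (Rle_dec (sqrt (aL * aR) * B) 1) as [Hle|_]; [contradiction|].
  pose proof (epsilon_spec (inhabits (0, 0))
    (fun p : R * R => theta_system B k aL aR (fst p) (snd p)) (ex_intro _ (tL, tR) Hsys)) as Hspec.
  destruct (epsilon _ _) as [sL sR]. simpl in Hspec.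
  rewrite theta_system_iff in Hsys, Hspec.
  destruct (coupled_solution_unique L L_saturating _ _ _ _ _ _ Ha Hb Hspec Hsys) as [-> ->].
  reflexivity.
Qed.

Lemma theta_system_exists (B k aL aR : R) : 0 < k -> 0 < B -> 0 < aL -> 0 < aR ->
  1 < B * B * (aL * aR) -> exists tL tR, theta_system B k aL aR tL tR /\ tL < 1 /\ tR < 1.
Proof.
  intros Hk HB HL HR Hhigh.
  assert (Hsk : 0 < sqrt k) by (apply sqrt_lt_R0; lra).
  destruct (coupled_solution_exists L L_saturating (B * sqrt k * aR) (B / sqrt k * aL) 1)
    as (tL & tR & Hsol & H1 & H2).
  - lra.
  - repeat apply Rmult_lt_0_compat; lra.
  - apply Rmult_lt_0_compat; [apply Rdiv_lt_0_compat|]; lra.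
  - exact L_lower_bound.
  - replace (B * sqrt k * aR * (B / sqrt k * aL)) with (B * B * (aL * aR)) by (field; lra). lra.
  - exists tL, tR. rewrite theta_system_iff. auto.
Qed.

Lemma F_of_theta_solution (B k aL aR tL tR : R) : 0 < k -> 0 < B -> 0 < aL -> 0 < aR ->
  theta_system B k aL aR tL tR -> F B k (aL, aR) = ((1 + tL * aL) / 2, (1 + tR * aR) / 2).
Proof. intros. unfold F. simpl. now rewrite (theta_of_solution B k aL aR tL tR). Qed.

Lemma alpha_system_iff_tanh_half (B k aL aR : R) : 0 < k -> 1/2 < aL < 1 -> 1/2 < aR < 1 ->
  alpha_system B k aL aR <->
  coupled_solution tanh_half (B * sqrt k) (B / sqrt k) (2 * aL - 1) (2 * aR - 1).
Proof.
  intros Hk HL HR. unfold alpha_system, coupled_solution.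
  assert (EL : (1 - (2 * aL - 1)) / (1 + (2 * aL - 1)) = (1 - aL) / aL) by (field; lra).
  assert (ER : (1 - (2 * aR - 1)) / (1 + (2 * aR - 1)) = (1 - aR) / aR) by (field; lra).
  assert (ZL : - (B * sqrt k * (2 * aR - 1)) = B * sqrt k * (1 - 2 * aR)) by ring.
  assert (ZR : - (B / sqrt k * (2 * aL - 1)) = B / sqrt k * (1 - 2 * aL)) by ring.
  split.
  - intros [E1 E2]. repeat split; try lra; symmetry; apply tanh_half_eq_iff; try lra.
    + rewrite ZL, EL. exact E1.
    + rewrite ZR, ER. exact E2.
  - intros (_ & _ & E1 & E2). symmetry in E1, E2.
    apply tanh_half_eq_iff in E1; [|lra]. apply tanh_half_eq_iff in E2; [|lra].
    rewrite ZL, EL in E1. rewrite ZR, ER in E2. split; assumption.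
Qed.

(* [F] fixes [(aL, aR)] above the threshold exactly when [theta_L aL = 2 aL - 1]
   and [theta_R aR = 2 aR - 1]. *)
Lemma theta_system_at_fixed_point (B k aL aR : R) : 0 < k -> 1/2 < aL < 1 -> 1/2 < aR < 1 ->
  theta_system B k aL aR ((2 * aL - 1) / aL) ((2 * aR - 1) / aR) <-> alpha_system B k aL aR.
Proof.
  intros Hk HL HR. unfold theta_system, alpha_system.
  assert (Hsk : 0 < sqrt k) by (apply sqrt_lt_R0; lra).
  replace (- (B * sqrt k * aR * ((2 * aR - 1) / aR))) with (B * sqrt k * (1 - 2 * aR))
    by (field; lra).
  replace (- (B / sqrt k * aL * ((2 * aL - 1) / aL))) with (B / sqrt k * (1 - 2 * aL))
    by (field; split; lra).
  replace (1 - (2 * aL - 1) / aL) with ((1 - aL) / aL) by (field; lra).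
  replace (1 - (2 * aR - 1) / aR) with ((1 - aR) / aR) by (field; lra).
  assert (0 < (2 * aL - 1) / aL) by (apply Rdiv_lt_0_compat; lra).
  assert (0 < (2 * aR - 1) / aR) by (apply Rdiv_lt_0_compat; lra).
  tauto.
Qed.

Lemma alpha_fixed_point (B k aL aR : R) : 0 < k -> 0 < B -> 1/2 < aL < 1 -> 1/2 < aR < 1 ->
  alpha_system B k aL aR -> is_fixed_point B k (aL, aR).
Proof.
  intros Hk HB HL HR Ha. split; [split; simpl; lra|].
  apply theta_system_at_fixed_point in Ha; [|lra..].
  assert (HL0 : 0 < aL) by lra. assert (HR0 : 0 < aR) by lra.
  rewrite (F_of_theta_solution _ _ _ _ _ _ Hk HB HL0 HR0 Ha). f_equal; field; lra.
Qed.

Lemma fixed_point_cases (B k aL aR : R) : 0 < k -> 0 < B -> is_fixed_point B k (aL, aR) ->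
  (sqrt (aL * aR) * B <= 1 /\ (aL, aR) = (1/2, 1/2)) \/
  (1/2 < aL < 1 /\ 1/2 < aR < 1 /\ alpha_system B k aL aR).
Proof.
  intros Hk HB [[[HL0 HL1] [HR0 HR1]] Hfix]. simpl in *.
  destruct (Rle_dec (sqrt (aL * aR) * B) 1) as [Hlow|Hhigh].
  { left. split; [exact Hlow|]. now rewrite <- Hfix, F_below_threshold. }
  right.
  assert (Hprod : 0 < aL * aR).
  { destruct (Rlt_or_le 0 (aL * aR)) as [|Hle]; [assumption|].
    exfalso. apply Hhigh. rewrite sqrt_neg_0 by lra. lra. }
  assert (HL : 0 < aL) by nra. assert (HR : 0 < aR) by nra.
  rewrite sqrt_mul_le_1_iff in Hhigh by lra.
  destruct (theta_system_exists B k aL aR) as (tL & tR & Hsys & HtL & HtR); try lra.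
  rewrite (F_of_theta_solution _ _ _ _ _ _ Hk HB HL HR Hsys) in Hfix.
  injection Hfix as EL ER.
  pose proof Hsys as (HtL0 & HtR0 & _).
  assert (HaL : 1/2 < aL < 1) by (split; nra).
  assert (HaR : 1/2 < aR < 1) by (split; nra).
  split; [exact HaL|]. split; [exact HaR|].
  apply theta_system_at_fixed_point; [lra..|].
  replace ((2 * aL - 1) / aL) with tL by (field_simplify_eq; lra).
  replace ((2 * aR - 1) / aR) with tR by (field_simplify_eq; lra).
  exact Hsys.
Qed.

Lemma half_fixed_point (B k : R) : B <= 2 -> is_fixed_point B k (1/2, 1/2).
Proof.
  intros HB. split; [split; simpl; lra|]. apply F_below_threshold.
  rewrite (sqrt_square (1/2)) by lra. lra.
Qed.

Lemma F_locally_constant_at_half (B k : R) : 0 < B -> B < 2 ->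
  forall h1 h2, norm2 h1 h2 < (2 - B) / (2 * B) -> F B k (1/2 + h1, 1/2 + h2) = (1/2, 1/2).
Proof.
  intros HB HB2 h1 h2 Hh. apply F_below_threshold.
  pose proof (Rabs_le_norm2_l h1 h2). pose proof (Rabs_le_norm2_r h1 h2).
  assert (Hr : 1/2 + (2 - B) / (2 * B) = / B) by (field; lra).
  assert (Hu : Rabs (1/2 + h1) < / B).
  { eapply Rle_lt_trans; [apply Rabs_triang|]. rewrite Rabs_pos_eq by lra. lra. }
  assert (Hv : Rabs (1/2 + h2) < / B).
  { eapply Rle_lt_trans; [apply Rabs_triang|]. rewrite Rabs_pos_eq by lra. lra. }
  destruct (Rle_or_lt ((1/2 + h1) * (1/2 + h2)) 0) as [Hneg|Hpos].
  { rewrite sqrt_neg_0 by exact Hneg. lra. }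
  apply sqrt_mul_le_1_iff; [lra | lra |].
  assert (Hprod : (1/2 + h1) * (1/2 + h2) <= / B * / B).
  { eapply Rle_trans; [apply Rle_abs|]. rewrite Rabs_mult.
    apply Rmult_le_compat; try apply Rabs_pos; lra. }
  apply (Rmult_le_compat_l (B * B)) in Hprod; [|nra].
  replace (B * B * (/ B * / B)) with 1 in Hprod by (field; lra). exact Hprod.
Qed.

Lemma jacobian_attractive_half (B k : R) : 0 < B -> B < 2 -> jacobian_attractive B k (1/2, 1/2).
Proof.
  intros HB HB2. split; [apply half_fixed_point; lra|].
  exists (Mat2 0 0 0 0). split.
  - apply (has_jacobian_locally_constant _ _ ((2 - B) / (2 * B))).
    + apply Rdiv_lt_0_compat; lra.
    + intros h1 h2 Hh. simpl. rewrite (F_locally_constant_at_half B k HB HB2 h1 h2 Hh).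
      symmetry. apply half_fixed_point. lra.
  - intros a b Heig. destruct (eigenvalue_zero_matrix a b Heig) as [-> ->].
    rewrite Rmult_0_l, Rplus_0_l, sqrt_0. lra.
Qed.

(* [z tanh_half' z < tanh_half z] at [z = c (2 v - 1)], where [tanh_half z = 2 u - 1]. *)
Lemma alpha_tangent_bound (c u v : R) : 0 < c -> 1/2 < u < 1 -> 1/2 < v < 1 ->
  exp (c * (1 - 2 * v)) = (1 - u) / u -> 2 * c * u * (1 - u) * (2 * v - 1) < 2 * u - 1.
Proof.
  intros Hc Hu Hv E.
  assert (Hth : tanh_half (c * (2 * v - 1)) = 2 * u - 1).
  { apply tanh_half_eq_iff; [lra|].
    replace (- (c * (2 * v - 1))) with (c * (1 - 2 * v)) by ring. rewrite E. field. lra. }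
  pose proof (tanh_half_tangent_lt (c * (2 * v - 1)) ltac:(nra)) as H.
  rewrite Hth in H. nra.
Qed.

(* With [al = c (1 - u)], [be = d (1 - v)], [s = (2 u - 1) / u], [r = (2 v - 1) / v]
   and [S = 1 - al be]: [S > 0], and the Schur-Cohn condition [4 S - 2 (s + r) + s r > 0]
   for the Jacobian of [F] at the fixed point. *)
Lemma alpha_stability (c d u v : R) : 0 < c -> 0 < d -> 1/2 < u < 1 -> 1/2 < v < 1 ->
  exp (c * (1 - 2 * v)) = (1 - u) / u -> exp (d * (1 - 2 * u)) = (1 - v) / v ->
  0 < 1 - c * (1 - u) * (d * (1 - v)) /\
  0 < 4 * (1 - c * (1 - u) * (d * (1 - v))) - 2 * ((2 * u - 1) / u + (2 * v - 1) / v)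
      + (2 * u - 1) / u * ((2 * v - 1) / v).
Proof.
  intros Hc Hd Hu Hv Eu Ev.
  pose proof (alpha_tangent_bound c u v Hc Hu Hv Eu) as Tu.
  pose proof (alpha_tangent_bound d v u Hd Hv Hu Ev) as Tv.
  set (X := 2 * c * u * (1 - u)) in Tu. set (Y := 2 * d * v * (1 - v)) in Tv.
  assert (HX : 0 < X) by (unfold X; repeat apply Rmult_lt_0_compat; lra).
  assert (HY : 0 < Y) by (unfold Y; repeat apply Rmult_lt_0_compat; lra).
  assert (HXY : X * Y < 1).
  { assert (Hprod : (X * (2 * v - 1)) * (Y * (2 * u - 1)) < (2 * u - 1) * (2 * v - 1))
      by (apply Rmult_le_0_lt_compat; nra).
    assert (0 < (2 * u - 1) * (2 * v - 1)) by nra. nra. }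
  assert (EXY : X * Y = 4 * (u * v) * (c * (1 - u) * (d * (1 - v)))) by (unfold X, Y; ring).
  split.
  - assert (0 <= c * (1 - u) * (d * (1 - v))) by (apply Rmult_le_pos; apply Rmult_le_pos; lra).
    assert (1 < 4 * (u * v)) by nra.
    assert (1 * (c * (1 - u) * (d * (1 - v))) <= 4 * (u * v) * (c * (1 - u) * (d * (1 - v))))
      by (apply Rmult_le_compat_r; lra).
    lra.
  - replace (4 * (1 - c * (1 - u) * (d * (1 - v))) - 2 * ((2 * u - 1) / u + (2 * v - 1) / v)
               + (2 * u - 1) / u * ((2 * v - 1) / v)) with ((1 - X * Y) / (u * v))
      by (rewrite EXY; field; lra).
    apply Rdiv_lt_0_compat; nra.
Qed.

Lemma exp_rate_at_fixed_point (c u v y : R) : 0 < u ->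
  exp (- (c * v * y)) = 1 - (2 * u - 1) / u -> c * (1 - u) = c * u * exp (- (c * (v * y))).
Proof. intros Hu E. rewrite Rmult_assoc in E. rewrite E. field. lra. Qed.

(* [F (aL, aR) = ((1 + P) / 2, (1 + Q) / 2)] with [P = aL theta_L], [Q = aR theta_R],
   and [P = aL L (c Q)], [Q = aR L (d P)]; differentiating implicitly at the fixed
   point, where [theta_L = s], [theta_R = r] and [exp (- c Q) = 1 - s], gives this matrix. *)
Definition alpha_jacobian (B k aL aR : R) : mat2 :=
  let al := B * sqrt k * (1 - aL) in let be := B / sqrt k * (1 - aR) in
  let s := (2 * aL - 1) / aL in let r := (2 * aR - 1) / aR in
  let S := 1 - al * be in
  Mat2 (s / (2 * S)) (al * r / (2 * S)) (be * s / (2 * S)) (r / (2 * S)).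

Lemma F_has_jacobian_alpha (B k aL aR : R) : 0 < k -> 2 < B -> 1/2 < aL < 1 -> 1/2 < aR < 1 ->
  alpha_system B k aL aR -> has_jacobian (F B k) (aL, aR) (alpha_jacobian B k aL aR).
Proof.
  intros Hk HB HL HR Ha.
  assert (Hsk : 0 < sqrt k) by (apply sqrt_lt_R0; lra).
  set (c := B * sqrt k). set (d := B / sqrt k).
  assert (Hc : 0 < c) by (unfold c; nra). assert (Hd : 0 < d) by (apply Rdiv_lt_0_compat; lra).
  set (s := (2 * aL - 1) / aL). set (r := (2 * aR - 1) / aR).
  assert (Hbase : theta_system B k aL aR s r) by (apply theta_system_at_fixed_point; auto).
  pose proof Ha as [Eu Ev].
  destruct (alpha_stability c d aL aR Hc Hd HL HR Eu Ev) as [HS _].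
  pose proof Hbase as (_ & _ & Es & Er).
  pose proof (exp_rate_at_fixed_point c aL aR r ltac:(lra) Es) as Hal.
  pose proof (exp_rate_at_fixed_point d aR aL s ltac:(lra) Er) as Hbe.
  apply has_jacobian_of_l1. intros eps Heps.
  destruct (coupled_products_linearization L L_saturating L_lipschitz (fun y => exp (- y))
              L_derive (fun y => Rlt_le _ _ (exp_pos (- y))) c d aL aR s r
              (c * (1 - aL)) (d * (1 - aR)) Hc Hd ltac:(lra) ltac:(lra)
              (proj1 (theta_system_iff _ _ _ _ _ _) Hbase) Hal Hbe HS eps Heps)
    as [dl [Hdl Hlin]].
  set (dl' := Rmin dl (Rmin (aL - 1/2) (aR - 1/2) / 2)).
  assert (Hdl1 : dl' <= dl) by apply Rmin_l.
  assert (Hdl2 : dl' <= (aL - 1/2) / 2).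
  { eapply Rle_trans; [apply Rmin_r|]. pose proof (Rmin_l (aL - 1/2) (aR - 1/2)). lra. }
  assert (Hdl3 : dl' <= (aR - 1/2) / 2).
  { eapply Rle_trans; [apply Rmin_r|]. pose proof (Rmin_r (aL - 1/2) (aR - 1/2)). lra. }
  exists dl'. split.
  { apply Rmin_pos; [lra|]. apply Rdiv_lt_0_compat; [apply Rmin_pos|]; lra. }
  intros h1 h2 Hh1 Hh2. cbn [fst snd].
  pose proof (proj1 (Rabs_le_between h1 dl') Hh1).
  pose proof (proj1 (Rabs_le_between h2 dl') Hh2).
  destruct (theta_system_exists B k (aL + h1) (aR + h2)) as (tL & tR & Hsys & _); try lra.
  { assert (1/4 < (aL + h1) * (aR + h2)) by nra. nra. }
  rewrite (F_of_theta_solution B k (aL + h1) (aR + h2) tL tR), (F_of_theta_solution B k aL aR s r)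
    by first [exact Hsys | exact Hbase | lra].
  apply theta_system_iff in Hsys.
  assert (Hh1' : Rabs h1 <= dl) by lra. assert (Hh2' : Rabs h2 <= dl) by lra.
  specialize (Hlin h1 h2 tL tR Hh1' Hh2' Hsys).
  unfold alpha_jacobian. cbn [fst snd m11 m12 m21 m22]. fold c d s r.
  set (S := 1 - c * (1 - aL) * (d * (1 - aR))) in *.
  set (X1 := (aL + h1) * tL - aL * s - (s * h1 + c * (1 - aL) * r * h2) / S) in Hlin.
  set (X2 := (aR + h2) * tR - aR * r - (d * (1 - aR) * s * h1 + r * h2) / S) in Hlin.
  replace ((1 + tL * (aL + h1)) / 2 - (1 + s * aL) / 2
           - (s / (2 * S) * h1 + c * (1 - aL) * r / (2 * S) * h2)) with (X1 / 2)
    by (unfold X1; field; lra).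
  replace ((1 + tR * (aR + h2)) / 2 - (1 + r * aR) / 2
           - (d * (1 - aR) * s / (2 * S) * h1 + r / (2 * S) * h2)) with (X2 / 2)
    by (unfold X2; field; lra).
  unfold Rdiv. rewrite !Rabs_mult, (Rabs_pos_eq (/ 2)) by lra.
  pose proof (Rabs_pos h1). pose proof (Rabs_pos h2). nra.
Qed.

Lemma alpha_jacobian_eigenvalues (B k aL aR : R) : 0 < k -> 0 < B ->
  1/2 < aL < 1 -> 1/2 < aR < 1 -> alpha_system B k aL aR ->
  forall a b, is_eigenvalue (alpha_jacobian B k aL aR) a b -> sqrt (a * a + b * b) < 1.
Proof.
  intros Hk HB HL HR [Eu Ev].
  assert (Hsk : 0 < sqrt k) by (apply sqrt_lt_R0; lra).
  set (c := B * sqrt k) in *. set (d := B / sqrt k) in *.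
  assert (Hc : 0 < c) by (unfold c; nra). assert (Hd : 0 < d) by (apply Rdiv_lt_0_compat; lra).
  destruct (alpha_stability c d aL aR Hc Hd HL HR Eu Ev) as [HS Hjury].
  unfold alpha_jacobian. fold c d.
  set (al := c * (1 - aL)) in *. set (be := d * (1 - aR)) in *.
  set (s := (2 * aL - 1) / aL) in *. set (r := (2 * aR - 1) / aR) in *.
  set (S := 1 - al * be) in *.
  assert (Hal : 0 < al) by (unfold al; nra). assert (Hbe : 0 < be) by (unfold be; nra).
  assert (Hs : 0 < s < 1) by (unfold s; split; [apply Rdiv_lt_0_compat | apply Rlt_div_l]; lra).
  assert (Hr : 0 < r < 1) by (unfold r; split; [apply Rdiv_lt_0_compat | apply Rlt_div_l]; lra).
  assert (Et : s / (2 * S) + r / (2 * S) = (s + r) / (2 * S)) by (field; lra).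
  assert (ED : s / (2 * S) * (r / (2 * S)) - al * r / (2 * S) * (be * s / (2 * S))
               = s * r / (4 * S)).
  { replace (al * r / (2 * S) * (be * s / (2 * S))) with (s * r * (al * be) / (4 * (S * S)))
      by (field; lra).
    replace (al * be) with (1 - S) by (unfold S; ring). field. lra. }
  apply eigenvalues_in_unit_disk; cbn [m11 m12 m21 m22].
  - apply Rmult_lt_0_compat; apply Rdiv_lt_0_compat; nra.
  - rewrite ED, Et.
    replace (1 - (s + r) / (2 * S) + s * r / (4 * S))
      with ((4 * S - 2 * (s + r) + s * r) / (4 * S)) by (field; lra).
    apply Rdiv_lt_0_compat; lra.
  - rewrite ED, Et.
    assert (0 < (s + r) / (2 * S)) by (apply Rdiv_lt_0_compat; lra).
    assert (0 < s * r / (4 * S)) by (apply Rdiv_lt_0_compat; nra). lra.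
  - rewrite Et. assert (0 < (s + r) / (2 * S)) by (apply Rdiv_lt_0_compat; lra).
    split; [lra|]. apply Rlt_div_l; [lra|]. nra.
Qed.

Lemma jacobian_attractive_alpha (B k aL aR : R) : 0 < k -> 2 < B ->
  1/2 < aL < 1 -> 1/2 < aR < 1 -> alpha_system B k aL aR -> jacobian_attractive B k (aL, aR).
Proof.
  intros Hk HB HL HR Ha. split; [apply alpha_fixed_point; auto; lra|].
  exists (alpha_jacobian B k aL aR). split.
  - now apply F_has_jacobian_alpha.
  - apply alpha_jacobian_eigenvalues; auto; lra.
Qed.

Lemma fixed_points_subcritical (B k : R) : 0 < k -> 0 < B -> B < 2 ->
  forall a, is_fixed_point B k a <-> a = (1/2, 1/2).
Proof.
  intros Hk HB HB2 [aL aR]. split.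
  - intros Hfix.
    destruct (fixed_point_cases B k aL aR Hk HB Hfix) as [[_ E] | (HL & HR & Ha)]; [exact E|].
    exfalso. apply alpha_system_iff_tanh_half in Ha; [|lra..].
    assert (Hsk : 0 < sqrt k) by (apply sqrt_lt_R0; lra).
    apply (coupled_solution_none tanh_half (B * sqrt k) (B / sqrt k) 2
             (2 * aL - 1) (2 * aR - 1)); [lra | nra | apply Rdiv_lt_0_compat; lra
                                        | exact tanh_half_lt_half | | exact Ha].
    replace (B * sqrt k * (B / sqrt k)) with (B * B) by (field; lra). nra.
  - intros ->. apply half_fixed_point. lra.
Qed.

Lemma alpha_system_unique_solution (B k : R) : 0 < k -> 2 < B ->
  exists aL aR, (1/2 < aL < 1 /\ 1/2 < aR < 1 /\ alpha_system B k aL aR) /\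
    (forall bL bR, 1/2 < bL < 1 -> 1/2 < bR < 1 -> alpha_system B k bL bR ->
       bL = aL /\ bR = aR).
Proof.
  intros Hk HB.
  assert (Hsk : 0 < sqrt k) by (apply sqrt_lt_R0; lra).
  assert (Hc : 0 < B * sqrt k) by nra. assert (Hd : 0 < B / sqrt k) by (apply Rdiv_lt_0_compat; lra).
  destruct (coupled_solution_exists tanh_half tanh_half_saturating (B * sqrt k) (B / sqrt k) 2)
    as (x & y & Hxy & Hx1 & Hy1); [lra | exact Hc | exact Hd | exact tanh_half_lower_bound | |].
  { replace (B * sqrt k * (B / sqrt k)) with (B * B) by (field; lra). nra. }
  pose proof Hxy as (Hx & Hy & _).
  exists ((1 + x) / 2), ((1 + y) / 2).
  assert (HL : 1/2 < (1 + x) / 2 < 1) by lra. assert (HR : 1/2 < (1 + y) / 2 < 1) by lra.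
  split.
  - split; [exact HL|]. split; [exact HR|].
    apply alpha_system_iff_tanh_half; [exact Hk | exact HL | exact HR |].
    replace (2 * ((1 + x) / 2) - 1) with x by field.
    replace (2 * ((1 + y) / 2) - 1) with y by field. exact Hxy.
  - intros bL bR HbL HbR Hb. apply alpha_system_iff_tanh_half in Hb; [|lra..].
    destruct (coupled_solution_unique tanh_half tanh_half_saturating _ _ _ _ _ _ Hc Hd Hb Hxy)
      as [E1 E2].
    split; lra.
Qed.

Lemma fixed_points_supercritical (B k aL aR : R) : 0 < k -> 2 < B ->
  1/2 < aL < 1 -> 1/2 < aR < 1 -> alpha_system B k aL aR ->
  (forall bL bR, 1/2 < bL < 1 -> 1/2 < bR < 1 -> alpha_system B k bL bR -> bL = aL /\ bR = aR) ->
  forall a, is_fixed_point B k a <-> a = (aL, aR).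
Proof.
  intros Hk HB HL HR Ha Huniq [bL bR]. split.
  - intros Hfix.
    destruct (fixed_point_cases B k bL bR Hk ltac:(lra) Hfix) as [[Hlow E] | (HbL & HbR & Hb)].
    + injection E as -> ->. exfalso.
      rewrite (sqrt_square (1/2)) in Hlow by lra. lra.
    + now destruct (Huniq bL bR HbL HbR Hb) as [-> ->].
  - intros [= -> ->]. apply alpha_fixed_point; auto; lra.
Qed.

Theorem lemma9 (k B : R) (hk : 1 <= k) (hB : 0 < B) :
  (B < 2 ->
     (forall a, is_fixed_point B k a <-> a = (1/2, 1/2)) /\
     jacobian_attractive B k (1/2, 1/2)) /\
  (2 < B ->
     exists aL aR,
       (1/2 < aL < 1 /\ 1/2 < aR < 1 /\ alpha_system B k aL aR) /\
       (forall bL bR, 1/2 < bL < 1 -> 1/2 < bR < 1 -> alpha_system B k bL bR ->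
          bL = aL /\ bR = aR) /\
       (forall a, is_fixed_point B k a <-> a = (aL, aR)) /\
       jacobian_attractive B k (aL, aR)).
Proof.
  assert (Hk : 0 < k) by lra.
  split.
  - intros HB2. split.
    + exact (fixed_points_subcritical B k Hk hB HB2).
    + exact (jacobian_attractive_half B k hB HB2).
  - intros HB2.
    destruct (alpha_system_unique_solution B k Hk HB2) as (aL & aR & Hsol & Huniq).
    exists aL, aR. destruct Hsol as (HL & HR & Ha).
    split; [auto|]. split; [exact Huniq|]. split.
    + exact (fixed_points_supercritical B k aL aR Hk HB2 HL HR Ha Huniq).
    + exact (jacobian_attractive_alpha B k aL aR Hk HB2 HL HR Ha).
Qed.
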